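(* (i) Let $L,L',L''$ be simplicial complexes, and let $\varphi_i: L\to L'$ and $\psi_i: L'\to L''$ be simplicial maps for $i=1,\dots,m$. If $\psi_i\sim\psi_{i+1}$ for all $i=1,\dots,m-1$, then $\mathrm{SD}(\psi_1\circ\varphi_1,\dots,\psi_m\circ\varphi_m)\le\mathrm{SD}(\varphi_1,\dots,\varphi_m)$. Moreover, equality holds provided that for all $i$, $\psi_i$ admits a simplicial map $\mu_i: L''\to L'$ with $\mu_i\circ\psi_i\sim 1_{L'}$, and $\psi_i\circ\varphi_i\sim\psi_j\circ\varphi_j$ for all distinct $i,j$. (ii) Let $\varphi_i: L\to L'$ and $\psi_i: L''\to L$ be simplicial maps for $i=1,\dots,m$. If $\psi_i\sim\psi_{i+1}$ for all $i=1,\dots,m-1$, then $\mathrm{SD}(\varphi_1\circ\psi_1,\dots,\varphi_m\circ\psi_m)\le\mathrm{SD}(\varphi_1,\dots,\varphi_m)$. Moreover, equality holds provided that for all $i$, $\psi_i$ admits a simplicial map $\mu_i: L\to L''$ with $\psi_i\circ\mu_i\sim 1_L$, and $\varphi_i\circ\psi_i\sim\varphi_j\circ\psi_j$ for all distinct $i,j$.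
   Context: Simplicial maps $f,g: K\to K'$ are contiguous if $f(\sigma)\cup g(\sigma)$ is a simplex of $K'$ for every simplex $\sigma$ of $K$; $f\sim g$ (same contiguity class) if there is a finite chain of simplicial maps from $f$ to $g$ with consecutive ones contiguous. For simplicial maps $\varphi_1,\dots,\varphi_m: K\to K'$, $\mathrm{SD}(\varphi_1,\dots,\varphi_m)$ is the least $n\ge0$ such that $K$ is a union of subcomplexes $K_0,\dots,K_n$ with $\varphi_i|_{K_k}\sim\varphi_j|_{K_k}$ for all $i,j$ and $k$. *)

From mathcomp Require Import all_boot.
From Stdlib Require Import ClassicalEpsilon Relation_Operators.

Set Implicit Arguments.
Unset Strict Implicit.
Unset Printing Implicit Defensive.

(* The vertices of the complex are the v with [set v] a simplex. *)
Record scomplex (V : finType) := SComplex {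
  simplices : {set {set V}};
  _ : set0 \notin simplices;
  _ : forall s t : {set V}, s \in simplices -> t \subset s -> t != set0 ->
        t \in simplices }.

Section Simplicial.
Variables (V W : finType).

Definition simplicial (K : scomplex V) (K' : scomplex W) (f : V -> W) : Prop :=
  forall s, s \in simplices K -> f @: s \in simplices K'.

Definition contiguous (K : scomplex V) (K' : scomplex W) (f g : V -> W) : Prop :=
  simplicial K K' f /\ simplicial K K' g /\
  forall s, s \in simplices K -> (f @: s) :|: (g @: s) \in simplices K'.

Definition contig_class (K : scomplex V) (K' : scomplex W) (f g : V -> W) : Prop :=
  simplicial K K' f /\ simplicial K K' g /\
  clos_refl_trans (V -> W) (contiguous K K') f g.

Definition SD_le (m : nat) (K : scomplex V) (K' : scomplex W)
  (phi : 'I_m -> V -> W) (n : nat) : Prop :=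
  exists Ks : 'I_n.+1 -> scomplex V,
    (forall k, simplices (Ks k) \subset simplices K) /\
    \bigcup_(k < n.+1) simplices (Ks k) = simplices K /\
    (forall k (i j : 'I_m), contig_class (Ks k) K' (phi i) (phi j)).

Definition SD_le_b m K K' phi n : bool :=
  if excluded_middle_informative (@SD_le m K K' phi n) then true else false.

(* SD as an extended natural number: None stands for infinity (no such
   finite cover exists), Some n for the least such n. *)
Definition SD (m : nat) (K : scomplex V) (K' : scomplex W)
  (phi : 'I_m -> V -> W) : option nat :=
  match excluded_middle_informative (exists n, SD_le_b K K' phi n) with
  | left h => Some (ex_minn h)
  | right _ => None
  end.

End Simplicial.

Definition ole (a b : option nat) : Prop :=
  match a, b with
  | _, None => True
  | None, Some _ => False
  | Some x, Some y => (x <= y)%N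
  end.

(* Contiguity classes are stable under pre- and post-composition with
   simplicial maps, and all psi_i lie in one class.  So a cover of L
   witnessing SD(phi_1, ..., phi_m) also works for the psi_i \o phi_i, and
   its pullback to L'' along a single psi_i0 works for the phi_i \o psi_i.
   Under the extra hypotheses both sides are 0: the compositions lie in one
   class by assumption, and composing the chain
   psi_i \o phi_i ~ psi_j \o phi_j ~ psi_i \o phi_j with the contiguity
   inverse mu_i of psi_i gives phi_i ~ phi_j (dually in (ii)). *)

From Stdlib Require Import ClassicalEpsilon Relation_Operators.
From mathcomp Require Import all_boot.

Set Implicit Arguments.
Unset Strict Implicit.
Unset Printing Implicit Defensive.

Lemma clos_rt_sym (T : Type) (R : T -> T -> Prop) :
  (forall x y, R x y -> R y x) ->
  forall x y, clos_refl_trans T R x y -> clos_refl_trans T R y x.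
Proof.
move=> symR x y; elim=> [x' y' /symR|x'|x' y' z' _ IHxy _ IHyz].
- exact: rt_step.
- exact: rt_refl.
- exact: rt_trans IHyz IHxy.
Qed.

Lemma clos_rt_map (A B : Type) (F : A -> B) (R : A -> A -> Prop)
    (S : B -> B -> Prop) :
  (forall x y, R x y -> S (F x) (F y)) ->
  forall x y, clos_refl_trans A R x y -> clos_refl_trans B S (F x) (F y).
Proof.
move=> RS x y; elim=> [x' y' /RS|x'|x' y' z' _ IHxy _ IHyz].
- exact: rt_step.
- exact: rt_refl.
- exact: rt_trans IHxy IHyz.
Qed.

Section Simplices.
Variables (V : finType) (K : scomplex V).

Lemma set0_notin_simplices : set0 \notin simplices K.
Proof. by case: K. Qed.

Lemma simplices_sub (s t : {set V}) :
  s \in simplices K -> t \subset s -> t != set0 -> t \in simplices K.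
Proof. by case: K s t. Qed.

End Simplices.

Lemma simplicial_id (V : finType) (K0 K : scomplex V) :
  simplices K0 \subset simplices K -> simplicial K0 K id.
Proof. by move=> /subsetP K0K s s0; rewrite imset_id K0K. Qed.

Lemma simplicial_comp (U V W : finType) (K0 : scomplex U) (K : scomplex V)
    (K' : scomplex W) (h : U -> V) (f : V -> W) :
  simplicial K0 K h -> simplicial K K' f -> simplicial K0 K' (f \o h).
Proof. by move=> sh sf s s0; rewrite imset_comp; apply/sf/sh. Qed.

Section Contiguity.
Variables (U V W X : finType) (K0 : scomplex U) (K : scomplex V).
Variables (K' : scomplex W) (K'' : scomplex X).

Lemma contiguous_sym (f g : V -> W) :
  contiguous K K' f g -> contiguous K K' g f.
Proof.
by case=> sf [sg fg]; do 2!split=> //; move=> s s0; rewrite setUC fg.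
Qed.

Lemma contiguous_postcomp (h : W -> X) (f g : V -> W) :
  simplicial K' K'' h -> contiguous K K' f g ->
  contiguous K K'' (h \o f) (h \o g).
Proof.
move=> sh [sf [sg fg]]; split; [exact: simplicial_comp sf sh|split].
  exact: simplicial_comp sg sh.
move=> s s0; rewrite (imset_comp h f) (imset_comp h g) -imsetU.
exact/sh/fg.
Qed.

Lemma contiguous_precomp (h : U -> V) (f g : V -> W) :
  simplicial K0 K h -> contiguous K K' f g ->
  contiguous K0 K' (f \o h) (g \o h).
Proof.
move=> sh [sf [sg fg]]; split; [exact: simplicial_comp sh sf|split].
  exact: simplicial_comp sh sg.
by move=> s s0; rewrite (imset_comp f h) (imset_comp g h); apply/fg/sh.
Qed.

Lemma contig_class_refl (f : V -> W) :
  simplicial K K' f -> contig_class K K' f f.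
Proof. by move=> sf; do 2!split=> //; apply: rt_refl. Qed.

Lemma contig_class_sym (f g : V -> W) :
  contig_class K K' f g -> contig_class K K' g f.
Proof.
case=> sf [sg fg]; do 2!split=> //.
exact: clos_rt_sym contiguous_sym _ _ fg.
Qed.

Lemma contig_class_trans (f g h : V -> W) :
  contig_class K K' f g -> contig_class K K' g h -> contig_class K K' f h.
Proof.
by case=> sf [_ fg] [_ [sh gh]]; do 2!split=> //; apply: rt_trans fg gh.
Qed.

Lemma contig_class_postcomp (h : W -> X) (f g : V -> W) :
  simplicial K' K'' h -> contig_class K K' f g ->
  contig_class K K'' (h \o f) (h \o g).
Proof.
move=> sh [sf [sg fg]]; split; [exact: simplicial_comp sf sh|split].
  exact: simplicial_comp sg sh.
apply: (clos_rt_map (F := fun f => h \o f)) fg => f1 f2.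
exact: contiguous_postcomp.
Qed.

Lemma contig_class_precomp (h : U -> V) (f g : V -> W) :
  simplicial K0 K h -> contig_class K K' f g ->
  contig_class K0 K' (f \o h) (g \o h).
Proof.
move=> sh [sf [sg fg]]; split; [exact: simplicial_comp sh sf|split].
  exact: simplicial_comp sh sg.
apply: (clos_rt_map (F := fun f => f \o h)) fg => f1 f2.
exact: contiguous_precomp.
Qed.

Lemma contig_class_chain m (f : 'I_m -> V -> W) :
  (forall i, simplicial K K' (f i)) ->
  (forall i j : 'I_m, val j = (val i).+1 -> contig_class K K' (f i) (f j)) ->
  forall i j, contig_class K K' (f i) (f j).
Proof.
move=> sf fS.
suff up k (i j : 'I_m) : val j = val i + k -> contig_class K K' (f i) (f j).
  move=> i j; have [ij|/ltnW ji] := leqP i j.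
    by apply: (up (j - i)); rewrite subnKC.
  by apply/contig_class_sym/(up (i - j)); rewrite subnKC.
elim: k i j => [|k IHk] i j ji.
  have -> : j = i by apply: val_inj; rewrite ji addn0.
  exact: contig_class_refl.
have ik : val i + k < m by rewrite -addnS -ji; exact/ltnW/ltn_ord.
apply: contig_class_trans (IHk i (Ordinal ik) erefl) (fS _ _ _).
by rewrite ji addnS.
Qed.

End Contiguity.

Lemma contig_class_cancel_l (V W X : finType) (K : scomplex V)
    (K' : scomplex W) (K'' : scomplex X) (psi psi' : W -> X) (mu : X -> W)
    (f g : V -> W) :
  simplicial K K' f -> simplicial K K' g -> simplicial K'' K' mu ->
  contig_class K' K' (mu \o psi) id -> contig_class K' K'' psi psi' ->
  contig_class K K'' (psi \o f) (psi' \o g) -> contig_class K K' f g.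
Proof.
move=> sf sg smu mupsi psipsi' fg.
apply: contig_class_trans (contig_class_sym (contig_class_precomp sf mupsi)) _.
apply: contig_class_trans (contig_class_postcomp smu fg) _.
apply: contig_class_trans _ (contig_class_precomp sg mupsi).
exact/(contig_class_postcomp smu)/(contig_class_precomp sg)/contig_class_sym.
Qed.

Lemma contig_class_cancel_r (U V W : finType) (K0 : scomplex U)
    (K : scomplex V) (K' : scomplex W) (psi psi' : U -> V) (mu : V -> U)
    (f g : V -> W) :
  simplicial K K' f -> simplicial K K' g -> simplicial K K0 mu ->
  contig_class K K (psi \o mu) id -> contig_class K0 K psi psi' ->
  contig_class K0 K' (f \o psi) (g \o psi') -> contig_class K K' f g.
Proof.
move=> sf sg smu psimu psipsi' fg.
apply: contig_class_trans (contig_class_sym (contig_class_postcomp sf psimu)) _.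
apply: contig_class_trans (contig_class_precomp smu fg) _.
apply: contig_class_trans _ (contig_class_postcomp sg psimu).
exact: contig_class_precomp smu
  (contig_class_postcomp sg (contig_class_sym psipsi')).
Qed.

Section SubcomplexDistance.
Variables (V W : finType) (K : scomplex V) (K' : scomplex W).
Variables (m : nat) (phi : 'I_m -> V -> W).

Lemma SD_le_bP n : reflect (SD_le K K' phi n) (SD_le_b K K' phi n).
Proof. by rewrite /SD_le_b; case: excluded_middle_informative; constructor. Qed.

Lemma SD_le_of_SD n : SD K K' phi = Some n -> SD_le K K' phi n.
Proof.
rewrite /SD; case: excluded_middle_informative => // exn [<-].
by case: ex_minnP => k /SD_le_bP.
Qed.

Lemma SD_le_ole n : SD_le K K' phi n -> ole (SD K K' phi) (Some n).
Proof.
move=> /SD_le_bP le_n; rewrite /SD.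
case: excluded_middle_informative => [exn|]; last by case; exists n.
by case: ex_minnP => k _; apply.
Qed.

Lemma SD_le_trivial_cover n :
  (forall i j, contig_class K K' (phi i) (phi j)) -> SD_le K K' phi n.
Proof.
move=> cc; exists (fun=> K); do 2!split=> //.
by apply/setP => s; apply/bigcupP/idP => [[]|s_K] //; exists ord0.
Qed.

Lemma SD_eq0 :
  (forall i j, contig_class K K' (phi i) (phi j)) -> SD K K' phi = Some 0.
Proof.
move=> /(SD_le_trivial_cover 0) /SD_le_ole.
by case: (SD K K' phi) => // k; rewrite /= leqn0 => /eqP ->.
Qed.

Lemma SD_eq0_pairwise :
  (forall i, simplicial K K' (phi i)) ->
  (forall i j, i != j -> contig_class K K' (phi i) (phi j)) ->
  SD K K' phi = Some 0.
Proof.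
move=> sphi cc; apply: SD_eq0 => i j.
by case: (eqVneq i j) => [<-|/cc //]; apply: contig_class_refl.
Qed.

End SubcomplexDistance.

Lemma ole_SD (V W V0 W0 : finType) (K : scomplex V) (K' : scomplex W)
    (K0 : scomplex V0) (K0' : scomplex W0) m (phi : 'I_m -> V -> W)
    (chi : 'I_m -> V0 -> W0) :
  (forall n, SD_le K K' phi n -> SD_le K0 K0' chi n) ->
  ole (SD K0 K0' chi) (SD K K' phi).
Proof.
move=> le_chi; case E: (SD K K' phi) => [n|]; last by case: (SD K0 K0' chi).
exact/SD_le_ole/le_chi/SD_le_of_SD.
Qed.

Lemma SD_le_postcomp (V1 V2 V3 : finType) (L : scomplex V1)
    (L' : scomplex V2) (L'' : scomplex V3) m (phi : 'I_m -> V1 -> V2)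
    (psi : 'I_m -> V2 -> V3) n :
  (forall i j, contig_class L' L'' (psi i) (psi j)) ->
  SD_le L L' phi n -> SD_le L L'' (fun i => psi i \o phi i) n.
Proof.
move=> cc_psi [Ks [subK [coverK cc_phi]]].
exists Ks; split=> //; split=> // k i j.
have [_ [sphi_j _]] := cc_phi k i j.
have [spsi_i _] := cc_psi i i.
apply: contig_class_trans (contig_class_postcomp spsi_i (cc_phi k i j)) _.
exact: contig_class_precomp sphi_j (cc_psi i j).
Qed.

Section Pullback.
Variables (U V : finType) (K0 : scomplex U) (K : scomplex V) (h : U -> V).

Definition pullback_simplices : {set {set U}} :=
  [set s in simplices K0 | h @: s \in simplices K].

Lemma set0_notin_pullback : set0 \notin pullback_simplices.
Proof. by rewrite inE negb_and set0_notin_simplices. Qed.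

Lemma pullback_sub (s t : {set U}) :
  s \in pullback_simplices -> t \subset s -> t != set0 ->
  t \in pullback_simplices.
Proof.
rewrite !inE => /andP [s_K0 hs_K] ts t0; rewrite (simplices_sub s_K0) //=.
by rewrite (simplices_sub hs_K) ?imsetS // imset_eq0.
Qed.

Definition pullback_complex : scomplex U :=
  SComplex set0_notin_pullback pullback_sub.

Lemma pullback_complex_subset :
  simplices pullback_complex \subset simplices K0.
Proof. by apply/subsetP => s; rewrite inE => /andP []. Qed.

Lemma simplicial_pullback : simplicial pullback_complex K h.
Proof. by move=> s; rewrite inE => /andP []. Qed.

End Pullback.

Lemma SD_le_precomp (V1 V2 V3 : finType) (L : scomplex V1)
    (L' : scomplex V2) (L'' : scomplex V3) m (phi : 'I_m -> V1 -> V2)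
    (psi : 'I_m -> V3 -> V1) n :
  (forall i, simplicial L L' (phi i)) ->
  (forall i j, contig_class L'' L (psi i) (psi j)) ->
  SD_le L L' phi n -> SD_le L'' L' (fun i => phi i \o psi i) n.
Proof.
case: m => [|m] in phi psi *.
  by move=> _ _ _; apply: SD_le_trivial_cover; case.
move=> sphi cc_psi [Ks [_ [coverK cc_phi]]].
pose psi0 := psi ord0; pose Ks'' k := pullback_complex L'' (Ks k) psi0.
have [spsi0 _] := cc_psi ord0 ord0.
exists Ks''; split=> [k|]; first exact: pullback_complex_subset.
split.
  apply/setP => s; apply/bigcupP/idP => [[k _]|s_L''].
    exact/subsetP/pullback_complex_subset.
  have : psi0 @: s \in \bigcup_(k < n.+1) simplices (Ks k).
    by rewrite coverK spsi0.
  by case/bigcupP => k _ psi0s_K; exists k; rewrite // inE s_L''.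
move=> k i j.
have to_psi0 l : contig_class (Ks'' k) L' (phi l \o psi l) (phi l \o psi0).
  apply/(contig_class_postcomp (sphi l)).
  apply/(contig_class_precomp _ (cc_psi l ord0)).
  exact/simplicial_id/pullback_complex_subset.
apply: contig_class_trans (to_psi0 i) _.
apply: contig_class_trans _ (contig_class_sym (to_psi0 j)).
exact: contig_class_precomp (@simplicial_pullback _ _ L'' _ psi0) (cc_phi k i j).
Qed.

Theorem proposition3p7 :
  (* (i) *)
  (forall (V1 V2 V3 : finType) (L : scomplex V1) (L' : scomplex V2)
          (L'' : scomplex V3) (m : nat)
          (phi : 'I_m -> V1 -> V2) (psi : 'I_m -> V2 -> V3),
     (forall i, simplicial L L' (phi i)) ->
     (forall i, simplicial L' L'' (psi i)) ->
     (forall i j : 'I_m, val j = (val i).+1 -> contig_class L' L'' (psi i) (psi j)) ->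
     ole (SD L L'' (fun i => psi i \o phi i)) (SD L L' phi) /\
     ((forall i, exists mu : V3 -> V2, simplicial L'' L' mu /\
                   contig_class L' L' (mu \o psi i) id) ->
      (forall i j : 'I_m, i != j ->
         contig_class L L'' (psi i \o phi i) (psi j \o phi j)) ->
      SD L L'' (fun i => psi i \o phi i) = SD L L' phi)) /\
  (* (ii) *)
  (forall (V1 V2 V3 : finType) (L : scomplex V1) (L' : scomplex V2)
          (L'' : scomplex V3) (m : nat)
          (phi : 'I_m -> V1 -> V2) (psi : 'I_m -> V3 -> V1),
     (forall i, simplicial L L' (phi i)) ->
     (forall i, simplicial L'' L (psi i)) ->
     (forall i j : 'I_m, val j = (val i).+1 -> contig_class L'' L (psi i) (psi j)) ->
     ole (SD L'' L' (fun i => phi i \o psi i)) (SD L L' phi) /\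
     ((forall i, exists mu : V1 -> V3, simplicial L L'' mu /\
                   contig_class L L (psi i \o mu) id) ->
      (forall i j : 'I_m, i != j ->
         contig_class L'' L' (phi i \o psi i) (phi j \o psi j)) ->
      SD L'' L' (fun i => phi i \o psi i) = SD L L' phi)).
Proof.
split=> V1 V2 V3 L L' L'' m phi psi sphi spsi cc_next;
  have cc_psi := contig_class_chain spsi cc_next.
- split; first by apply: ole_SD => n; apply: SD_le_postcomp.
  move=> inv_psi cc_comp.
  rewrite (SD_eq0_pairwise _ cc_comp) => [|i]; last exact: simplicial_comp.
  apply/esym/SD_eq0_pairwise => // i j ij.
  have [mu [smu mupsi]] := inv_psi i.
  exact: contig_class_cancel_l smu mupsi (cc_psi i j) (cc_comp i j ij).
- split; first by apply: ole_SD => n; apply: SD_le_precomp.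
  move=> inv_psi cc_comp.
  rewrite (SD_eq0_pairwise _ cc_comp) => [|i]; last exact: simplicial_comp.
  apply/esym/SD_eq0_pairwise => // i j ij.
  have [mu [smu psimu]] := inv_psi i.
  exact: contig_class_cancel_r smu psimu (cc_psi i j) (cc_comp i j ij).
Qed.
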